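(* The function $\mathcal{I}$ is strictly increasing on $[0,1]\cap\mathbb{Q}$: for all rationals $0\le x<y\le1$, $\mathcal{I}(x)<\mathcal{I}(y)$.
   Context: For $x\in\mathbb{R}$ let $\{x\}=x-\lfloor x\rfloor$. The interrobang function $\mathcal{I}\colon[0,1]\cap\mathbb{Q}\to\mathbb{R}$ is defined recursively by $\mathcal{I}(0)=0$; $\mathcal{I}(x)=4^{-\lfloor1/x\rfloor}\big(1-2\,\mathcal{I}(\{1/x\})\big)$ if $0<x\le\tfrac12$; and $\mathcal{I}(x)=\tfrac38-\tfrac34\,\mathcal{I}(1/x-1)-\tfrac12\,\mathcal{I}(1-x)$ if $\tfrac12<x\le1$. The recursion is well founded: with the height $a/b\mapsto|a|+|b|$ ($\gcd(a,b)=1$), every argument on the right-hand side has strictly smaller height than $x$, so $\mathcal{I}$ is uniquely defined. *)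

From HB Require Import structures.
From mathcomp Require Import all_boot all_order all_algebra.
Set Implicit Arguments. Unset Strict Implicit. Unset Printing Implicit Defensive.
Import Order.TTheory GRing.Theory Num.Theory.
Local Open Scope ring_scope.

Definition fracq (x : rat) : rat := x - (Num.floor x)%:~R.

Definition height (x : rat) : nat := (`|numq x| + `|denq x|)%N.

(* Fuel-indexed unfolding of the defining recursion.  Since every recursive
   argument has strictly smaller height, fuel = height x suffices. *)
Fixpoint interrobang_fuel (n : nat) (x : rat) : rat :=
  match n with
  | O => 0
  | S n' =>
    if x == 0 then 0
    else if x <= 2^-1 then
      (4%:Q) ^ (- Num.floor (x^-1)) * (1 - 2 * interrobang_fuel n' (fracq (x^-1)))
    else
      3 / 8 - 3 / 4 * interrobang_fuel n' (x^-1 - 1)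
            - 2^-1 * interrobang_fuel n' (1 - x)
  end.

Definition interrobang (x : rat) : rat := interrobang_fuel (height x) x.

(* On (0, 1/2] the recursion reads I x = 4^-k (1 - 2 I {1/x}) with k = floor (1/x) >= 2,
   and on (1/2, 1] it reads I x = 3/8 - 3/4 I (1/x - 1) - 1/2 I (1 - x); every argument
   on the right lies in [0, 1] and has smaller height.  A first induction on the height
   gives 0 <= I < 3/8 on [0, 1), with I <= 1/16 on [0, 1/2] and I > 1/16 on (1/2, 1].
   Hence I x lies in (4^-k / 4, 4^-k] on (0, 1/2], so points with different floor (1/x)
   are correctly ordered, and the 1/16 threshold orders x <= 1/2 < y.  In the remaining
   cases both sides of the recursion are decreasing functions of decreasing arguments,
   and a second induction, on the sum of the heights, concludes. *)

From Pilot Require Import Defs.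
From HB Require Import structures.
From mathcomp Require Import all_boot all_order all_algebra.
From mathcomp Require Import ring lra zify.
Set Implicit Arguments.
Unset Strict Implicit.
Unset Printing Implicit Defensive.

Import Order.TTheory GRing.Theory Num.Theory.
Local Open Scope ring_scope.

Lemma height_gt0 (x : rat) : (0 < height x)%N.
Proof. by rewrite /height addn_gt0 orbC absz_gt0 denq_neq0. Qed.

Lemma height_intr_div_le (n d : int) :
  d != 0 -> (height (n%:~R / d%:~R) <= `|n| + `|d|)%N.
Proof.
case: divqP => [|k x k_neq0 _]; first by rewrite eqxx.
rewrite /height !abszM; have : (0 < `|k|)%N by rewrite absz_gt0.
nia.
Qed.

Lemma numq_le_denq (x : rat) : x <= 1 -> numq x <= denq x.
Proof.
by rewrite -[x in x <= 1]divq_num_den ler_pdivrMr ?ltr0z ?denq_gt0 // mul1r ler_int.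
Qed.

Lemma height_fracq_inv_lt (x : rat) : 0 < x <= 1 -> (height (Defs.fracq x^-1) < height x)%N.
Proof.
case/andP=> x_gt0 x_le1; rewrite [X in (_ < X)%N]/height.
have n_gt0 : 0 < numq x by rewrite numq_gt0.
have nd := numq_le_denq x_le1.
have invE : x^-1 = (denq x)%:~R / (numq x)%:~R by rewrite -{1}[x]divq_num_den invf_div.
set f := Num.floor x^-1.
have /andP[fn_le fn_gt] : f * numq x <= denq x < f * numq x + numq x.
  have := floor_le x^-1; have := floorD1_gt x^-1; rewrite -/f invE.
  rewrite ltr_pdivrMr ?ltr0z // ler_pdivlMr ?ltr0z // -!intrM ltr_int ler_int.
  by rewrite mulrDl mul1r => -> ->.
have -> : Defs.fracq x^-1 = (denq x - f * numq x)%:~R / (numq x)%:~R.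
  by rewrite /Defs.fracq -/f invE intrB intrM; field; rewrite intr_eq0 gt_eqF.
apply: leq_ltn_trans (height_intr_div_le _ (lt0r_neq0 n_gt0)) _.
move: (f * numq x) fn_le fn_gt => m *.
have : (`|denq x - m| < `|denq x|)%N by lia.
lia.
Qed.

Lemma height_invr_subr1_lt (x : rat) : 0 < x <= 1 -> (height (x^-1 - 1) < height x)%N.
Proof.
case/andP=> x_gt0 x_le1; rewrite [X in (_ < X)%N]/height.
have n_gt0 : 0 < numq x by rewrite numq_gt0.
have nd := numq_le_denq x_le1.
have -> : x^-1 - 1 = (denq x - numq x)%:~R / (numq x)%:~R.
  by rewrite -{1}[x]divq_num_den invf_div intrB; field; rewrite intr_eq0 gt_eqF.
apply: leq_ltn_trans (height_intr_div_le _ (lt0r_neq0 n_gt0)) _; lia.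
Qed.

Lemma height_subr_lt (x : rat) : 2^-1 < x <= 1 -> (height (1 - x) < height x)%N.
Proof.
case/andP=> x_gt_half x_le1; rewrite [X in (_ < X)%N]/height.
have d_gt0 := denq_gt0 x.
have nd := numq_le_denq x_le1.
have dn : denq x < 2 * numq x.
  rewrite -(ltr_int rat) intrM; move: x_gt_half.
  by rewrite -{1}[x]divq_num_den ltr_pdivlMr ?ltr0z // => ?; lra.
have -> : 1 - x = (denq x - numq x)%:~R / (denq x)%:~R.
  by rewrite -{1}[x]divq_num_den intrB; field; rewrite intr_eq0 gt_eqF.
apply: leq_ltn_trans (height_intr_div_le _ (lt0r_neq0 d_gt0)) _; lia.
Qed.

Lemma fracq_itv (y : rat) : 0 <= Defs.fracq y < 1.
Proof.
rewrite /Defs.fracq; have := floor_le y; have := floorD1_gt y; rewrite intrD.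
by move=> ? ?; apply/andP; split; lra.
Qed.

Lemma invr_subr1_itv (x : rat) : 2^-1 < x <= 1 -> 0 <= x^-1 - 1 < 1.
Proof.
case/andP=> x_gt_half x_le1; have x_gt0 : 0 < x by lra.
have := mulfV (lt0r_neq0 x_gt0); have : 0 < x^-1 by rewrite invr_gt0.
by move=> ? ?; apply/andP; split; nra.
Qed.

Lemma le_half_pos (x : rat) : 0 < x <= 2^-1 -> 0 < x <= 1.
Proof. by case/andP=> x_gt0 x_le_half; rewrite x_gt0; lra. Qed.

Lemma gt_half_pos (x : rat) : 2^-1 < x <= 1 -> 0 < x <= 1.
Proof. by case/andP=> x_gt_half ->; rewrite andbT; lra. Qed.

Lemma subr_unit_itv (x : rat) : 2^-1 < x <= 1 -> 0 <= 1 - x <= 1.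
Proof. by case/andP=> x_gt_half x_le1; apply/andP; split; lra. Qed.

Lemma unit_rat_ind (Q : rat -> Prop) :
  Q 0 ->
  (forall x : rat, 0 < x <= 2^-1 -> Q (Defs.fracq x^-1) -> Q x) ->
  (forall x : rat, 2^-1 < x <= 1 -> Q (x^-1 - 1) -> Q (1 - x) -> Q x) ->
  forall x : rat, 0 <= x <= 1 -> Q x.
Proof.
move=> Q0 Qsmall Qlarge x.
elim: (height x).+1 {-2}x (ltnSn (height x)) => // N IHN {}x hx /andP[x_ge0 x_le1].
have [-> //|x_neq0] := eqVneq x 0.
have x_pos : 0 < x <= 1 by rewrite lt_def x_neq0 x_ge0.
have [x_le_half|x_gt_half] := lerP x 2^-1.
  have x_small : 0 < x <= 2^-1 by rewrite x_le_half andbT; case/andP: x_pos.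
  have /andP[r_ge0 r_lt1] := fracq_itv x^-1.
  have := height_fracq_inv_lt x_pos.
  by move=> ?; apply: Qsmall => //; apply: IHN; rewrite ?r_ge0 ?ltW //; lia.
have x_large : 2^-1 < x <= 1 by rewrite x_gt_half.
have /andP[s_ge0 s_lt1] := invr_subr1_itv x_large.
have := height_invr_subr1_lt x_pos; have := height_subr_lt x_large.
move=> ? ?; apply: Qlarge => //; apply: IHN; rewrite ?subr_unit_itv //; try lia.
by rewrite s_ge0 ltW.
Qed.

Lemma interrobang_fuel_eq (x : rat) : 0 <= x <= 1 -> forall n m,
  (height x <= n)%N -> (height x <= m)%N -> interrobang_fuel n x = interrobang_fuel m x.
Proof.
move: x; apply: unit_rat_ind.
- by case=> [|n] [|m] _ _ //=; rewrite eqxx.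
- move=> x x_small IH [|n] [|m] hn hm; try by have := height_gt0 x; lia.
  have /andP[x_gt0 x_le_half] := x_small.
  have := height_fracq_inv_lt (le_half_pos x_small).
  by move=> ?; rewrite /= gt_eqF // x_le_half (IH n m) //; lia.
- move=> x x_large IHs IHu [|n] [|m] hn hm; try by have := height_gt0 x; lia.
  have /andP[x_gt_half _] := x_large.
  have x_pos := gt_half_pos x_large; have /andP[x_gt0 _] := x_pos.
  have := height_invr_subr1_lt x_pos; have := height_subr_lt x_large.
  rewrite /= gt_eqF // leNgt x_gt_half /= => ? ?.
  by rewrite (IHs n m) ?(IHu n m) //; lia.
Qed.

Lemma interrobang0 : interrobang 0 = 0.
Proof. by rewrite /interrobang; case: (height 0) => //= n; rewrite eqxx. Qed.

Lemma interrobang_small (x : rat) : 0 < x <= 2^-1 ->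
  interrobang x = 4%:Q ^ (- Num.floor x^-1) * (1 - 2 * interrobang (Defs.fracq x^-1)).
Proof.
move=> x_small; have /andP[x_gt0 x_le_half] := x_small.
have r01 : 0 <= Defs.fracq x^-1 <= 1 by have /andP[-> /ltW] := fracq_itv x^-1.
rewrite {1}/interrobang; move: (height_fracq_inv_lt (le_half_pos x_small)).
case: (height x) => [//|k] hk /=; rewrite gt_eqF // x_le_half.
by rewrite (interrobang_fuel_eq r01 hk (leqnn _)).
Qed.

Lemma interrobang_large (x : rat) : 2^-1 < x <= 1 ->
  interrobang x = 3 / 8 - 3 / 4 * interrobang (x^-1 - 1) - 2^-1 * interrobang (1 - x).
Proof.
move=> x_large; have /andP[x_gt_half _] := x_large.
have x_pos := gt_half_pos x_large; have /andP[x_gt0 _] := x_pos.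
have s01 : 0 <= x^-1 - 1 <= 1 by have /andP[-> /ltW] := invr_subr1_itv x_large.
rewrite {1}/interrobang.
move: (height_subr_lt x_large) (height_invr_subr1_lt x_pos).
case: (height x) => [//|k] hu hs /=; rewrite gt_eqF // leNgt x_gt_half /=.
by rewrite (interrobang_fuel_eq s01 hs (leqnn _))
  (interrobang_fuel_eq (subr_unit_itv x_large) hu (leqnn _)).
Qed.

Lemma ler_mulr_exprzN (R : realFieldType) (b : R) (m n : int) :
  1 <= b -> m < n -> b * b ^ (- n) <= b ^ (- m).
Proof.
move=> b_ge1 lt_mn; have b_unit : b \is a GRing.unit by rewrite unitfE; lra.
rewrite -[X in X * _]expr1z -exprzDr // ler_weXz2l //; lia.
Qed.

Lemma exprzN_floor_invr_itv (x : rat) :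
  0 < x <= 2^-1 -> 0 < 4%:Q ^ (- Num.floor x^-1) <= 16^-1.
Proof.
case/andP=> x_gt0 x_le_half; rewrite exprz_gt0 //=.
have : 2 <= Num.floor x^-1.
  rewrite floor_ge_int; have := mulfV (lt0r_neq0 x_gt0).
  have : 0 < x^-1 by rewrite invr_gt0.
  by move=> ? ?; nra.
move=> k_ge2; have -> : 16^-1 = 4%:Q ^ (- 2%:Z) by rewrite -exprz_inv.
by rewrite ler_weXz2l // lerN2.
Qed.

Lemma interrobang_bounds (x : rat) : 0 <= x <= 1 ->
  [/\ 0 <= interrobang x, 0 < x -> 0 < interrobang x,
      x < 1 -> interrobang x < 3 / 8, x <= 2^-1 -> interrobang x <= 16^-1
    & 2^-1 < x -> 16^-1 < interrobang x].
Proof.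
move: x; apply: unit_rat_ind.
- by rewrite interrobang0; split; rewrite ?ltxx // => _; lra.
- move=> x x_small [a_ge0 _ a_lt _ _]; rewrite (interrobang_small x_small).
  have /andP[p_gt0 p_le] := exprzN_floor_invr_itv x_small.
  have /andP[_ r_lt1] := fracq_itv x^-1.
  have {r_lt1}a_lt := a_lt r_lt1; case/andP: x_small => _ x_le_half.
  (* [lra] and [lia] try to evaluate [interrobang] and [Num.floor] subterms, which does
     not terminate in practice; such subterms are abstracted or cleared beforehand. *)
  set p := 4%:Q ^ _ in p_gt0 p_le *; set a := interrobang _ in a_ge0 a_lt *.
  clearbody p a.
  have Ix_gt0 : 0 < p * (1 - 2 * a) by rewrite mulr_gt0 // subr_gt0; lra.
  have Ix_le : p * (1 - 2 * a) <= p by rewrite ler_piMr ?(ltW p_gt0) // lerBlDr lerDl mulr_ge0.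
  by split=> *; lra.
- move=> x x_large [A_ge0 _ A_lt _ _] [C_ge0 C_gt0 _ C_le _].
  rewrite (interrobang_large x_large); have /andP[x_gt_half x_le1] := x_large.
  have /andP[_ s_lt1] := invr_subr1_itv x_large.
  set A := interrobang _ in A_ge0 A_lt *; set C := interrobang _ in C_ge0 C_gt0 C_le *.
  clearbody A C; have {s_lt1}A_lt := A_lt s_lt1.
  have {}C_le : C <= 16^-1 by apply: C_le; lra.
  have {}C_gt0 : x < 1 -> 0 < C by move=> ?; apply: C_gt0; lra.
  by split=> *; lra.
Qed.

Lemma interrobang_small_itv (x : rat) : 0 < x <= 2^-1 ->
  4%:Q ^ (- Num.floor x^-1) / 4 < interrobang x <= 4%:Q ^ (- Num.floor x^-1).
Proof.
move=> x_small; rewrite (interrobang_small x_small).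
have /andP[p_gt0 _] := exprzN_floor_invr_itv x_small.
have /andP[r_ge0 r_lt1] := fracq_itv x^-1.
have [a_ge0 _ a_lt _ _] := interrobang_bounds (introT andP (conj r_ge0 (ltW r_lt1))).
have {r_lt1}a_lt := a_lt r_lt1.
set p := 4%:Q ^ _ in p_gt0 *; set a := interrobang _ in a_ge0 a_lt *.
clearbody p a; apply/andP; split; nra.
Qed.

Lemma interrobang_lt_floor (x y : rat) : 0 < x <= 2^-1 -> 0 < y <= 2^-1 ->
  Num.floor y^-1 < Num.floor x^-1 -> interrobang x < interrobang y.
Proof.
move=> x_small y_small lt_floor.
have /andP[_ Ix_le] := interrobang_small_itv x_small.
have /andP[Iy_gt _] := interrobang_small_itv y_small.
have := @ler_mulr_exprzN _ 4%:Q _ _ isT lt_floor.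
set px := 4%:Q ^ _ in Ix_le *; set py := 4%:Q ^ _ in Iy_gt *.
clearbody px py; move=> scale_le; apply: (le_lt_trans Ix_le); apply: le_lt_trans Iy_gt.
by rewrite ler_pdivlMr //; lra.
Qed.

Lemma interrobang_lt_eq_floor (x y : rat) : 0 < x <= 2^-1 -> 0 < y <= 2^-1 ->
  Num.floor x^-1 = Num.floor y^-1 ->
  interrobang (Defs.fracq y^-1) < interrobang (Defs.fracq x^-1) ->
  interrobang x < interrobang y.
Proof.
move=> x_small y_small eq_floor lt_frac.
rewrite (interrobang_small x_small) (interrobang_small y_small) eq_floor.
have /andP[p_gt0 _] := exprzN_floor_invr_itv y_small.
by rewrite ltr_pM2l // ltrD2l ltrN2 ltr_pM2l.
Qed.

Lemma interrobang_lt_large (x y : rat) : 2^-1 < x <= 1 -> 2^-1 < y <= 1 ->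
  interrobang (y^-1 - 1) < interrobang (x^-1 - 1) ->
  interrobang (1 - y) < interrobang (1 - x) ->
  interrobang x < interrobang y.
Proof.
move=> x_large y_large lt_inv lt_sub.
rewrite (interrobang_large x_large) (interrobang_large y_large).
move: lt_inv lt_sub; set A := interrobang _; set A' := interrobang _.
set C := interrobang _; set C' := interrobang _; clearbody A A' C C'.
by move=> ? ?; lra.
Qed.

Lemma interrobang_lt_height N (x y : rat) : (height x + height y <= N)%N ->
  0 <= x -> x < y -> y <= 1 -> interrobang x < interrobang y.
Proof.
elim: N x y => [|N IHN] x y hN x_ge0 lt_xy y_le1; first by have := height_gt0 x; lia.
have y_gt0 : 0 < y := le_lt_trans x_ge0 lt_xy.
have x_le1 : x <= 1 := ltW (lt_le_trans lt_xy y_le1).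
have y01 : 0 <= y <= 1 by rewrite ltW.
have [_ By_gt0 _ _ By_large] := interrobang_bounds y01.
have [-> | x_neq0] := eqVneq x 0; first by rewrite interrobang0; apply: By_gt0.
have x_gt0 : 0 < x by rewrite lt_def x_neq0.
have x01 : 0 <= x <= 1 by rewrite x_ge0.
have [_ _ _ Bx_small _] := interrobang_bounds x01.
have x_pos : 0 < x <= 1 by rewrite x_gt0.
have y_pos : 0 < y <= 1 by rewrite y_gt0.
have lt_inv : y^-1 < x^-1 by rewrite ltf_pV2 ?posrE.
have [x_le_half | x_gt_half] := lerP x 2^-1.
  have x_small : 0 < x <= 2^-1 by rewrite x_gt0.
  have [y_le_half | y_gt_half] := lerP y 2^-1; last first.
    exact: le_lt_trans (Bx_small x_le_half) (By_large y_gt_half).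
  have y_small : 0 < y <= 2^-1 by rewrite y_gt0.
  case: (ltgtP (Num.floor y^-1) (Num.floor x^-1)) => [lt_floor | gt_floor | eq_floor].
  - exact: interrobang_lt_floor.
  - by move: gt_floor; rewrite ltNge le_floor // ltW.
  apply: (interrobang_lt_eq_floor x_small y_small (esym eq_floor)); apply: IHN.
  - have := height_fracq_inv_lt x_pos; have := height_fracq_inv_lt y_pos; clear -hN; lia.
  - by have /andP[] := fracq_itv y^-1.
  - by rewrite /Defs.fracq eq_floor ltrD2r.
  - by have /andP[_ /ltW] := fracq_itv x^-1.
have x_large : 2^-1 < x <= 1 by rewrite x_gt_half.
have y_large : 2^-1 < y <= 1 by rewrite (lt_trans x_gt_half lt_xy).
apply: (interrobang_lt_large x_large y_large); apply: IHN.
- have := height_invr_subr1_lt x_pos; have := height_invr_subr1_lt y_pos; clear -hN; lia.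
- by have /andP[] := invr_subr1_itv y_large.
- by rewrite ltrD2r.
- by have /andP[_ /ltW] := invr_subr1_itv x_large.
- have := height_subr_lt x_large; have := height_subr_lt y_large; clear -hN; lia.
- by rewrite subr_ge0.
- by rewrite ltrD2l ltrN2.
- by rewrite gerBl.
Qed.

Theorem mainTheorem9 (x y : rat) :
  0 <= x -> x < y -> y <= 1 -> interrobang x < interrobang y.
Proof. exact: interrobang_lt_height. Qed.
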